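(* Let $\mathbf{C}$ be a locally small category, $\Omega$ an object, $\Phi\colon\mathbf{C}^{\mathrm{op}}\to\mathbf{Pos}$ a functor whose fibres have all meets preserved by reindexing $f^*=\Phi f$, and $d_\Omega\in\Phi\Omega$. Let $\alpha_Y(S)=\bigwedge_{k\in S}k^*(d_\Omega)$, $\gamma_Y(d)=\{k\in\mathbf{C}(Y,\Omega)\mid d\preceq k^*(d_\Omega)\}$ and $\mathrm{cl}_Y=\gamma_Y\circ\alpha_Y$ for every object $Y$. Let $F\colon\mathbf{C}\to\mathbf{C}$ be a functor, $(\mathit{ev}_\lambda\colon F\Omega\to\Omega)_{\lambda\in\Lambda}$ a family of morphisms, and $\Lambda_Y(S)=\{\mathit{ev}_\lambda\circ Fh\mid\lambda\in\Lambda,h\in S\}$ for $S\subseteq\mathbf{C}(Y,\Omega)$. Fix an object $X$, a set $\Theta_X\subseteq\mathbf{C}(X,\Omega)$ of constants, a closure operator $\mathrm{cl}'_X$ on $(\mathcal{P}(\mathbf{C}(X,\Omega)),\subseteq)$, and an $F$-coalgebra $c\colon X\to FX$, and define $$\mathrm{lo}_X(S)=\mathcal{P}(c^\bullet)\big(\Lambda_X(\mathrm{cl}'_X(S))\big)\cup\Theta_X .$$ If $\mathrm{cl}'_X$ is compatible, i.e. $\Lambda_X(\mathrm{cl}'_X(\mathrm{cl}_X(S)))\subseteq\mathrm{cl}_{FX}(\Lambda_X(\mathrm{cl}'_X(S)))$ for all $S\subseteq\mathbf{C}(X,\Omega)$, then $\mathrm{lo}_X$ is $\mathrm{cl}_X$-compatible: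 $\mathrm{lo}_X(\mathrm{cl}_X(S))\subseteq\mathrm{cl}_X(\mathrm{lo}_X(S))$ for all $S\subseteq\mathbf{C}(X,\Omega)$.
   Context: A closure operator on a poset is a monotone, idempotent, extensive map. For $g\colon A\to B$, $g^\bullet\colon\mathbf{C}(B,\Omega)\to\mathbf{C}(A,\Omega)$ is precomposition with $g$, and $\mathcal{P}(g^\bullet)$ is its direct image on subsets; $c^\bullet\colon\mathbf{C}(FX,\Omega)\to\mathbf{C}(X,\Omega)$. *)

Set Implicit Arguments.
Unset Strict Implicit.

Definition subset_of (T : Type) := T -> Prop.
Definition incl {T : Type} (A B : subset_of T) : Prop := forall x, A x -> B x.

Record Category := {
  Ob :> Type;
  Hom : Ob -> Ob -> Type;
  comp : forall a b c : Ob, Hom b c -> Hom a b -> Hom a c;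
  idm : forall a : Ob, Hom a a;
  comp_assoc : forall a b c d (h : Hom c d) (g : Hom b c) (f : Hom a b),
      comp h (comp g f) = comp (comp h g) f;
  comp_id_l : forall a b (f : Hom a b), comp (idm b) f = f;
  comp_id_r : forall a b (f : Hom a b), comp f (idm a) = f
}.
Arguments Hom {c} _ _ : rename.
Arguments comp {c a b c0} _ _ : rename.
Arguments idm {c} _ : rename.

Record Endofunctor (C : Category) := {
  Fob :> Ob C -> Ob C;
  Fmap : forall a b : Ob C, Hom a b -> Hom (Fob a) (Fob b);
  Fmap_id : forall a, Fmap (idm a) = idm (Fob a);
  Fmap_comp : forall a b c (g : Hom b c) (f : Hom a b),
      Fmap (comp g f) = comp (Fmap g) (Fmap f)
}.
Arguments Fmap {C} e {a b} _.

(* A functor Phi : C^op -> Pos whose fibres have all meets (of arbitrary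
   subsets), preserved by every reindexing map f^* = Phi f. *)
Record MeetFibration (C : Category) := {
  fib : Ob C -> Type;
  fle : forall Y, fib Y -> fib Y -> Prop;
  fle_refl : forall Y (d : fib Y), fle d d;
  fle_trans : forall Y (d e g : fib Y), fle d e -> fle e g -> fle d g;
  fle_antisym : forall Y (d e : fib Y), fle d e -> fle e d -> d = e;
  reindex : forall X Y : Ob C, Hom X Y -> fib Y -> fib X;
  reindex_mono : forall X Y (f : Hom X Y) d e, fle d e -> fle (reindex f d) (reindex f e);
  reindex_id : forall Y (d : fib Y), reindex (idm Y) d = d;
  reindex_comp : forall X Y Z (g : Hom Y Z) (f : Hom X Y) d,
      reindex (comp g f) d = reindex f (reindex g d);
  fmeet : forall Y, subset_of (fib Y) -> fib Y;
  fmeet_lb : forall Y (S : subset_of (fib Y)) d, S d -> fle (fmeet S) d;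
  fmeet_glb : forall Y (S : subset_of (fib Y)) e,
      (forall d, S d -> fle e d) -> fle e (fmeet S);
  reindex_meet : forall X Y (f : Hom X Y) (S : subset_of (fib Y)),
      reindex f (fmeet S) = fmeet (fun e => exists d, S d /\ e = reindex f d)
}.
Arguments fle {C} m {Y} _ _.
Arguments reindex {C} m {X Y} _ _.
Arguments fmeet {C} m {Y} _.

Section Defs.
Context {C : Category} (Phi : MeetFibration C) (Omega : Ob C) (dO : fib Phi Omega).

Definition alpha (Y : Ob C) (S : subset_of (Hom Y Omega)) : fib Phi Y :=
  fmeet Phi (fun e => exists k, S k /\ e = reindex Phi k dO).

Definition gamma (Y : Ob C) (d : fib Phi Y) : subset_of (Hom Y Omega) :=
  fun k => fle Phi d (reindex Phi k dO).

Definition cl (Y : Ob C) (S : subset_of (Hom Y Omega)) : subset_of (Hom Y Omega) :=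
  gamma (alpha S).
End Defs.
Arguments cl {C} Phi Omega dO {Y} S _.
Section Dummy.
End Dummy.

Definition LambdaY {C : Category} (F : Endofunctor C) (Omega : Ob C)
  {Lam : Type} (ev : Lam -> Hom (F Omega) Omega) (Y : Ob C)
  (S : subset_of (Hom Y Omega)) : subset_of (Hom (F Y) Omega) :=
  fun g => exists l h, S h /\ g = comp (ev l) (Fmap F h).

Arguments LambdaY {C} F Omega {Lam} ev {Y} S _.

Definition Pprecomp {C : Category} {A B Omega : Ob C} (g : Hom A B)
  (T : subset_of (Hom B Omega)) : subset_of (Hom A Omega) :=
  fun k => exists t, T t /\ k = comp t g.

Definition closure_operator {T : Type} (c : subset_of T -> subset_of T) : Prop :=
  (forall S S', incl S S' -> incl (c S) (c S')) /\
  (forall S, incl S (c S)) /\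
  (forall S, incl (c (c S)) (c S) /\ incl (c S) (c (c S))).

Definition lo {C : Category} (F : Endofunctor C) (Omega : Ob C)
  {Lam : Type} (ev : Lam -> Hom (F Omega) Omega) (X : Ob C)
  (Theta : subset_of (Hom X Omega))
  (clX' : subset_of (Hom X Omega) -> subset_of (Hom X Omega))
  (c : Hom X (F X)) (S : subset_of (Hom X Omega)) : subset_of (Hom X Omega) :=
  fun k => Pprecomp c (LambdaY F Omega ev (clX' S)) k \/ Theta k.
Arguments lo {C} F Omega {Lam} ev {X} Theta clX' c S _.


(* The Theta part of lo_X lies in lo_X(S), hence in its closure.  For the
   other part, the hypothesis moves cl_X inside Lambda_X(cl'_X(-)) at the cost
   of a cl_FX outside, and cl commutes laxly with precomposition because
   reindexing preserves meets: g^*(alpha_B T) = alpha_A (g^bullet T). *)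

Section ClosurePrecomposition.
Variables (C : Category) (Phi : MeetFibration C) (Omega : Ob C) (dO : fib Phi Omega).

Lemma Pprecomp_monotone (A B : Ob C) (g : Hom A B) (T T' : subset_of (Hom B Omega)) :
  incl T T' -> incl (Pprecomp g T) (Pprecomp g T').
Proof.
  intros HT k [t [Ht ->]]. exists t. split; [apply HT; exact Ht | reflexivity].
Qed.

Lemma alpha_antitone (Y : Ob C) (S S' : subset_of (Hom Y Omega)) :
  incl S S' -> fle Phi (alpha dO S') (alpha dO S).
Proof.
  intros HS. apply fmeet_glb. intros d [k [Hk ->]].
  apply fmeet_lb. exists k. split; [apply HS; exact Hk | reflexivity].
Qed.

Lemma cl_extensive (Y : Ob C) (S : subset_of (Hom Y Omega)) :
  incl S (cl Phi Omega dO S).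
Proof.
  intros k Hk. apply fmeet_lb. exists k. split; [exact Hk | reflexivity].
Qed.

Lemma cl_monotone (Y : Ob C) (S S' : subset_of (Hom Y Omega)) :
  incl S S' -> incl (cl Phi Omega dO S) (cl Phi Omega dO S').
Proof.
  intros HS k Hk. eapply fle_trans; [apply alpha_antitone; exact HS | exact Hk].
Qed.

Lemma reindex_alpha (A B : Ob C) (g : Hom A B) (T : subset_of (Hom B Omega)) :
  reindex Phi g (alpha dO T) = alpha dO (Pprecomp g T).
Proof.
  unfold alpha. rewrite reindex_meet. apply fle_antisym.
  - apply fmeet_glb. intros e [k [[t [Ht ->]] ->]].
    apply fmeet_lb. exists (reindex Phi t dO). split.
    + exists t. split; [exact Ht | reflexivity].
    + apply reindex_comp.
  - apply fmeet_glb. intros e [d [[t [Ht ->]] ->]].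
    apply fmeet_lb. exists (comp t g). split.
    + exists t. split; [exact Ht | reflexivity].
    + symmetry. apply reindex_comp.
Qed.

Lemma Pprecomp_cl (A B : Ob C) (g : Hom A B) (T : subset_of (Hom B Omega)) :
  incl (Pprecomp g (cl Phi Omega dO T)) (cl Phi Omega dO (Pprecomp g T)).
Proof.
  intros k [t [Ht ->]]. unfold cl, gamma.
  rewrite <- reindex_alpha, reindex_comp.
  apply reindex_mono. exact Ht.
Qed.

End ClosurePrecomposition.

Theorem proposition3 (C : Category) (Omega : Ob C) (Phi : MeetFibration C)
  (dO : fib Phi Omega) (F : Endofunctor C) (Lam : Type)
  (ev : Lam -> Hom (F Omega) Omega) (X : Ob C)
  (Theta : subset_of (Hom X Omega))
  (clX' : subset_of (Hom X Omega) -> subset_of (Hom X Omega))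
  (c : Hom X (F X)) :
  closure_operator clX' ->
  (forall S : subset_of (Hom X Omega),
      incl (LambdaY F Omega ev (clX' (cl Phi Omega dO S)))
           (cl Phi Omega dO (LambdaY F Omega ev (clX' S)))) ->
  forall S : subset_of (Hom X Omega),
    incl (lo F Omega ev Theta clX' c (cl Phi Omega dO S))
         (cl Phi Omega dO (lo F Omega ev Theta clX' c S)).
Proof.
  intros _ Hcompat S k [Hk | Hk].
  - assert (Hcl : cl Phi Omega dO
                    (Pprecomp c (LambdaY F Omega ev (clX' S))) k).
    { apply Pprecomp_cl.
      eapply Pprecomp_monotone; [apply Hcompat | exact Hk]. }
    eapply cl_monotone; [| exact Hcl].
    intros h Hh. left. exact Hh.
  - apply cl_extensive. right. exact Hk.
Qed.
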